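(* Let $T$ be a generalized tree-like graph with parameters $n_o\ge1$, $k_c$, $\hat k_b\ge1$, orchestrator vertices $o_1,\dots,o_{n_o}$ and bridge sets $B_i=N_{o_i}\cap N_{o_{i+1}}$. Let $1\le a\le b\le n_o$ and let $c\ne c'$ be clients with $c\in N_{o_a}$, $c'\in N_{o_b}$, and, if $a<b$, $c\notin N_{o_{a+1}}$ and $c'\notin N_{o_{b-1}}$; then the proximity is $d(c,c')=b-a+1$. For each $m\in\{a,\dots,b-1\}$ choose a bridge $\beta_m\in B_m$. Starting from $T$, apply successively, for $m=a,a+1,\dots,b-1$, the $\sigma_x$-measurement rule at $o_m$ with support vertex $b_0=\beta_m$ (replace $H$ by $\tau_{\beta_m}(\tau_{o_m}(\tau_{\beta_m}(H))-o_m)$), and finally the $\sigma_x$-measurement rule at $o_b$ with support vertex $b_0=c'$. Then all these $d(c,c')$ operations are well defined (each support vertex is a neighbour of the measured vertex in the current graph) and in the resulting graph $c$ and $c'$ are adjacent. Equivalently, $d(c,c')$ single-qubit $\sigma_x$-measurements on orchestrator qubits along a shortest $c$–$c'$ path create, up to local unitaries, an edge (artificial link) between $c$ and $c'$.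
   Context: All graphs are finite, simple and undirected. For $H=(V,E)$ and $a\in V$, $N_a=\{b:\{a,b\}\in E\}$; $\tau_a(H)$ toggles the edge $\{b,c\}$ for every pair of distinct $b,c\in N_a$ and leaves other edges unchanged; $H-a$ deletes $a$ and its incident edges. Graph state $\ket{H}=\prod_{\{a,b\}\in E}\mathrm{CZ}_{ab}\ket{+}^{\otimes|V|}$; measuring the qubit at $a$ in $\sigma_x$ with chosen $b_0\in N_a$ yields, up to local unitaries, the graph state of $\tau_{b_0}(\tau_a(\tau_{b_0}(H))-a)$. Generalized tree-like graph with parameters $n_o\ge1$, $k_c$, $\hat k_b\ge1$: vertex set $\{o_1,\dots,o_{n_o}\}\cup V_c$ (disjoint) such that (i) every edge joins some $o_i$ to a client; (ii) $|N_{o_i}|=k_c$ for all $i$; (iii) $|N_{o_i}\cap N_{o_{i+1}}|=\hat k_b$ for $1\le i<n_o$; (iv) $N_{o_i}\cap N_{o_j}=\emptyset$ for $|i-j|\ge2$; (v) every client is adjacent to some $o_i$. A client adjacent to more than one orchestrator vertex is a bridge. The proximity $d(c,c')$ of distinct clients is $1$ plus the number of bridges lying strictly between $c$ and $c'$ on a shortest $c$–$c'$ path. *)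

From mathcomp Require Import all_boot.
Set Implicit Arguments.
Unset Strict Implicit.
Unset Printing Implicit Defensive.

(* A graph on a finite ambient type V: a vertex set and a set of edges,
   each edge being a 2-element subset of the vertex set (simple, undirected). *)
Record graph (V : finType) := Graph { gverts : {set V}; gedges : {set {set V}} }.

Definition simple_graph (V : finType) (G : graph V) : Prop :=
  forall e, e \in gedges G -> #|e| = 2 /\ e \subset gverts G.

Definition adj (V : finType) (G : graph V) (x y : V) : bool :=
  (x != y) && ([set x; y] \in gedges G).

Definition nbr (V : finType) (G : graph V) (a : V) : {set V} :=
  [set b in gverts G | adj G a b].

Definition tau (V : finType) (G : graph V) (a : V) : graph V :=
  let X := [set [set b; c] | b in nbr G a, c in nbr G a & b != c] in
  Graph (gverts G) ((gedges G :\: X) :|: (X :\: gedges G)).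

Definition vdel (V : finType) (G : graph V) (a : V) : graph V :=
  Graph (gverts G :\ a) [set e in gedges G | a \notin e].

Definition meas_x (V : finType) (G : graph V) (a b0 : V) : graph V :=
  tau (vdel (tau (tau G b0) a) a) b0.

(* orchestrator vertices o_1, ..., o_n (indexed by naturals 1..n) *)
Definition orch_set (V : finType) (o : nat -> V) (n : nat) : {set V} :=
  [set x | has (fun i => o i == x) (iota 1 n)].

Definition clients (V : finType) (G : graph V) (o : nat -> V) (n : nat) : {set V} :=
  gverts G :\: orch_set o n.

Definition tree_like (V : finType) (G : graph V) (n kc kb : nat) (o : nat -> V) : Prop :=
  [/\ simple_graph G, 1 <= n, 1 <= kb,
      (forall i, 1 <= i <= n -> o i \in gverts G) /\
      (forall i j, 1 <= i <= n -> 1 <= j <= n -> o i = o j -> i = j) &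
  [/\ (forall e, e \in gedges G ->
          exists i c, [/\ 1 <= i <= n, c \in clients G o n & e = [set o i; c]]),
      (forall i, 1 <= i <= n -> #|nbr G (o i)| = kc),
      (forall i, 1 <= i < n -> #|nbr G (o i) :&: nbr G (o i.+1)| = kb),
      (forall i j, 1 <= i <= n -> 1 <= j <= n ->
          (i + 2 <= j) || (j + 2 <= i) -> nbr G (o i) :&: nbr G (o j) = set0) &
      (forall c, c \in clients G o n ->
          exists i, 1 <= i <= n /\ c \in nbr G (o i))]].

Definition bridge (V : finType) (G : graph V) (o : nat -> V) (n : nat) (x : V) : bool :=
  (x \in clients G o n) &&
  has (fun i => has (fun j => [&& i != j, x \in nbr G (o i) & x \in nbr G (o j)])
                    (iota 1 n)) (iota 1 n).

Definition walk (V : finType) (G : graph V) (x : V) (p : seq V) (y : V) : bool :=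
  path (adj G) x p && (last x p == y).

Definition shortest_walk (V : finType) (G : graph V) (x : V) (p : seq V) (y : V) : Prop :=
  walk G x p y /\ forall q, walk G x q y -> size p <= size q.

(* d(c,c') = d : 1 + number of bridges strictly inside a shortest c--c' path
   (there is a shortest path, and every shortest path gives the value d) *)
Definition is_proximity (V : finType) (G : graph V) (o : nat -> V) (n : nat)
    (c c' : V) (d : nat) : Prop :=
  (exists p, shortest_walk G c p c') /\
  (forall p, shortest_walk G c p c' ->
     d = (count (bridge G o n) (behead (belast c p))).+1).

Fixpoint chain (V : finType) (G : graph V) (o beta : nat -> V) (a k : nat) : graph V :=
  match k with
  | 0 => G
  | k'.+1 => meas_x (chain G o beta a k') (o (a + k')) (beta (a + k'))
  end.

From mathcomp Require Import all_boot zify.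
Set Implicit Arguments. Unset Strict Implicit. Unset Printing Implicit Defensive.

(* Every edge of a tree-like graph joins an orchestrator to a client, and a
   client adjacent to two orchestrators o_i, o_j is a bridge with |i - j| = 1.
   Along a client-to-client walk the orchestrator index therefore moves by at
   most one at each intermediate bridge, and bridges are at least two steps
   apart; this pins the proximity to b - a + 1, attained by the walk
   c, o_a, beta_a, o_(a+1), ..., o_b, c'.
   If o_m is not adjacent to x, measuring o_m with support w toggles {x, y}
   exactly when w ~ x and o_m ~ y.  So measuring o_m with support beta_m
   replaces the neighbourhood of o_(m+1) by its symmetric difference with that
   of o_m and changes nothing else seen from o_(m+1), ..., o_n.  After the
   chain, the neighbourhood of o_b is the symmetric difference of the original
   neighbourhoods of o_a, ..., o_b, which contains c and c'; the last
   measurement, with support c', joins c' to every neighbour of o_b. *)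

Section GraphOperations.
Variable V : finType.
Implicit Types (G : graph V) (a v w x y z : V).

Lemma adjC G x y : adj G x y = adj G y x.
Proof. by rewrite /adj setUC eq_sym. Qed.

Lemma adjxx G x : adj G x x = false.
Proof. by rewrite /adj eqxx. Qed.

Lemma in_nbr G x y : (y \in nbr G x) = (y \in gverts G) && adj G x y.
Proof. by rewrite inE. Qed.

Lemma adj_tau G v x y : x != y ->
  adj (tau G v) x y = adj G x y (+) (x \in nbr G v) && (y \in nbr G v).
Proof.
move=> xy; rewrite /adj /tau /= xy /= in_setU !in_setD.
set X := imset2 _ _ _.
have -> : ([set x; y] \in X) = (x \in nbr G v) && (y \in nbr G v).
  apply/imset2P/andP => [[u w uN] | [xN yN]].
    rewrite inE => /andP[wN _] e.
    have inN t : t \in [set x; y] -> t \in nbr G v.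
      by rewrite e in_set2 => /orP[]/eqP->.
    by rewrite !inN // !in_set2 eqxx ?orbT.
  by exists x y => //; rewrite inE yN xy.
by case: ([set x; y] \in gedges G); case: ((x \in nbr G v) && (y \in nbr G v)).
Qed.

Lemma adj_vdel G a x y : adj (vdel G a) x y = [&& adj G x y, x != a & y != a].
Proof.
rewrite /adj /vdel /= inE !in_set2 negb_or ![a == _]eq_sym.
by case: (x != y); case: ([set x; y] \in gedges G).
Qed.

Lemma gverts_meas_x G a w : gverts (meas_x G a w) = gverts G :\ a.
Proof. by []. Qed.

Lemma adj_meas_x G a w x y :
  a \in gverts G -> w \in nbr G a -> x != y -> x != a -> y != a ->
  x \in gverts G -> y \in gverts G ->
  adj (meas_x G a w) x y = adj G x y (+) (adj G w x && adj G w y)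
    (+) ((adj G a x (+) adj G w x) && (adj G a y (+) adj G w y))
    (+) [&& x != w, y != w, adj G a x & adj G a y].
Proof.
move=> aV; rewrite in_nbr => /andP[wV aw] xy xa ya xV yV.
have wa : w != a by apply: contraTneq aw => ->; rewrite adjxx.
have aNw : a \in nbr G w by rewrite in_nbr aV adjC.
have wNw : (w \in nbr G w) = false by rewrite in_nbr adjxx andbF.
have nbr_tau z : z != a -> z \in gverts G ->
    (z \in nbr (tau G w) a) = adj G a z (+) adj G w z.
  by move=> za zV; rewrite in_nbr /= zV adj_tau 1?eq_sym // aNw in_nbr zV.
have nbr_vdel z : z != a -> z \in gverts G ->
    (z \in nbr (vdel (tau (tau G w) a) a) w) = (z != w) && adj G a z.
  move=> za zV; rewrite in_nbr /= in_setD1 za zV adj_vdel wa za /= andbT.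
  have [->|zw] := eqVneq z w; first by rewrite adjxx.
  rewrite adj_tau 1?eq_sym // adj_tau 1?eq_sym // !nbr_tau // wNw adjxx aw /=.
  by case: (adj G w z); case: (adj G a z).
rewrite /meas_x adj_tau // !nbr_vdel // adj_vdel xa ya !andbT.
rewrite adj_tau // !nbr_tau // adj_tau // !in_nbr xV yV /=.
by case: (x != w); case: (y != w); case: (adj G x y); case: (adj G w x);
   case: (adj G w y); case: (adj G a x); case: (adj G a y).
Qed.

Lemma adj_meas_x_nonadj G a w x y :
  a \in gverts G -> w \in nbr G a -> x != y -> x != a -> y != a ->
  x \in gverts G -> y \in gverts G -> adj G a x = false ->
  adj (meas_x G a w) x y = adj G x y (+) (adj G w x && adj G a y).
Proof.
move=> aV wN xy xa ya xV yV ax; rewrite adj_meas_x // ax /= !andbF /= addbF.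
by case: (adj G x y); case: (adj G w x); case: (adj G a y); case: (adj G w y).
Qed.

Lemma adj_meas_x_support G a w x :
  a \in gverts G -> w \in nbr G a -> x != w -> x != a -> x \in gverts G ->
  adj (meas_x G a w) x w = adj G a x.
Proof.
move=> aV wN xw xa xV; have := wN; rewrite in_nbr => /andP[wV aw].
have wa : w != a by apply: contraTneq aw => ->; rewrite adjxx.
rewrite adj_meas_x // eqxx /= !andbF addbF adjxx aw /= andbT (adjC G w x).
by case: (adj G x w); case: (adj G a x).
Qed.

Lemma shortest_walk_exists G x p y : walk G x p y -> exists q, shortest_walk G x q y.
Proof.
move=> xpy; have has_walk : exists N, [exists q : N.-tuple V, walk G x q y].
  by exists (size p); apply/existsP; exists (in_tuple p).
have [N /existsP[q xqy] minN] := ex_minnP has_walk.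
exists q; split => // r xry; rewrite size_tuple; apply: minN.
by apply/existsP; exists (in_tuple r).
Qed.

End GraphOperations.

Section TreeLike.
Variables (V : finType) (T : graph V) (n kc kb : nat) (o : nat -> V).
Hypothesis tl : tree_like T n kc kb o.
Local Notation cl := (clients T o n).

Lemma orch_notin_clients i : 0 < i <= n -> o i \notin cl.
Proof.
move=> hi; rewrite in_setD negb_and negbK inE; apply/orP; left.
by apply/hasP; exists i; rewrite // mem_iota; lia.
Qed.

Lemma orch_neq_client i z : 0 < i <= n -> z \in cl -> o i != z.
Proof. by move=> hi zc; apply: contraTneq zc => <-; apply: orch_notin_clients. Qed.

Lemma client_vert z : z \in cl -> z \in gverts T.
Proof. by case/setDP. Qed.

Lemma orch_vert i : 0 < i <= n -> o i \in gverts T.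
Proof. by case: tl => _ _ _ [orchV _] _; apply: orchV. Qed.

Lemma orch_inj i j : 0 < i <= n -> 0 < j <= n -> o i = o j -> i = j.
Proof. by case: tl => _ _ _ [_ orch_inj] _; apply: orch_inj. Qed.

Lemma orch_neq i j : 0 < i <= n -> 0 < j <= n -> i != j -> o i != o j.
Proof. by move=> hi hj; apply: contraNneq => /(orch_inj hi hj) ->. Qed.

Lemma adj_tree_like u v : adj T u v -> exists2 i, 0 < i <= n &
  (u = o i /\ v \in cl) \/ (v = o i /\ u \in cl).
Proof.
case/andP=> uv uvE; case: tl => _ _ _ _ [edgeE _ _ _ _].
have [i [z [hi zc e]]] := edgeE _ uvE; exists i => //.
have : u \in [set o i; z] /\ v \in [set o i; z] by rewrite -e !in_set2 !eqxx orbT.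
rewrite !in_set2 => -[/orP[]/eqP eu /orP[]/eqP ev]; subst u v;
  by [rewrite eqxx in uv | left | right].
Qed.

Lemma adj_orch_client i z : 0 < i <= n -> adj T (o i) z -> z \in cl.
Proof.
move=> hi /adj_tree_like[j _ [[_ ->] // | [_ oic]]].
by case/negP: (orch_notin_clients hi).
Qed.

Lemma adj_orch_orch i j : 0 < i <= n -> 0 < j <= n -> adj T (o i) (o j) = false.
Proof.
by move=> hi hj; apply/negP => /(adj_orch_client hi); apply/negP/orch_notin_clients.
Qed.

Lemma adj_client_orch x v : x \in cl -> adj T x v -> exists2 j, 0 < j <= n & v = o j.
Proof.
move=> xc /adj_tree_like[j hj [[ex _] | [ev _]]]; last by exists j.
by case/negP: (orch_notin_clients hj); rewrite -ex.
Qed.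

Lemma adj_clients_bipartite x v : adj T x v -> (v \in cl) = (x \notin cl).
Proof.
case/adj_tree_like=> i hi [[-> vc] | [-> xc]]; first by rewrite vc orch_notin_clients.
by rewrite xc (negbTE (orch_notin_clients hi)).
Qed.

Lemma bridge_client x : bridge T o n x -> x \in cl.
Proof. by case/andP. Qed.

Lemma adj_orch_near i j z : 0 < i <= n -> 0 < j <= n ->
  adj T (o i) z -> adj T (o j) z -> j <= i.+1.
Proof.
move=> hi hj aiz ajz; rewrite leqNgt; apply/negP => ij.
have zV := client_vert (adj_orch_client hi aiz).
case: tl => _ _ _ _ [_ _ _ disj _].
have /setP/(_ z) : nbr T (o i) :&: nbr T (o j) = set0.
  by apply: disj => //; rewrite addn2 ij.
by rewrite in_setI !in_nbr zV aiz ajz inE.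
Qed.

Lemma adj_orch_bridge i j z : 0 < i <= n -> 0 < j <= n -> i != j ->
  adj T (o i) z -> adj T (o j) z -> bridge T o n z.
Proof.
move=> hi hj ij aiz ajz; have zc := adj_orch_client hi aiz.
rewrite /bridge zc; apply/hasP; exists i; first by rewrite mem_iota; lia.
apply/hasP; exists j; first by rewrite mem_iota; lia.
by rewrite ij !in_nbr client_vert // aiz ajz.
Qed.

Lemma adj_orch_index i j z : 0 < i <= n -> 0 < j <= n ->
  adj T (o i) z -> adj T (o j) z -> j <= i + bridge T o n z.
Proof.
move=> hi hj aiz ajz; have [<-|ij] := eqVneq i j; first exact: leq_addr.
by rewrite (adj_orch_bridge hi hj ij aiz ajz) addn1 (adj_orch_near hi hj aiz ajz).
Qed.

Lemma bridge_count_upper x p y : y \in cl -> walk T x p y ->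
  2 * count (bridge T o n) (belast x p) + (x \notin cl) <= size p.
Proof.
move=> yc; elim: p x => [|v p IH] x /andP[/= pth /eqP lst]; first by rewrite lst yc.
case/andP: pth => xv vp; have := IH v; rewrite /walk vp lst eqxx => /(_ isT).
rewrite /= (adj_clients_bipartite xv); case xc: (x \in cl) => /=.
  by case: (bridge T o n x); lia.
by rewrite (contraFF (@bridge_client x) xc); lia.
Qed.

Lemma bridge_count_lower s x p y : y \in cl ->
  (forall i, 0 < i <= n -> adj T (o i) y -> s <= i) -> walk T x p y ->
  forall i, 0 < i <= n -> x = o i \/ adj T (o i) x ->
  s <= i + count (bridge T o n) (belast x p).
Proof.
move=> yc yfar; elim: p x => [|v p IH] x /andP[/= pth /eqP lst] i hi.
  rewrite lst addn0 => -[ey | ]; last exact: yfar.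
  by case/negP: (orch_notin_clients hi); rewrite -ey.
case/andP: pth => xv vp; have {}IH := IH v; rewrite /walk vp lst eqxx in IH.
rewrite /= addnCA => -[ex | aix].
  have := IH isT i hi; rewrite -ex xv => /(_ (or_intror isT)); lia.
have [j hj ev] := adj_client_orch (adj_orch_client hi aix) xv.
have := adj_orch_index hi hj aix; rewrite -ev adjC => /(_ xv).
have := IH isT j hj (or_introl ev); lia.
Qed.

Lemma interior_bridges_upper x p y : x \in cl -> y \in cl -> x != y -> walk T x p y ->
  2 * count (bridge T o n) (behead (belast x p)) + 2 <= size p.
Proof.
move=> xc yc xy; case: p => [|u p] /=.
  by case/andP=> _ /= /eqP xy'; rewrite xy' eqxx in xy.
case/andP=> /andP[xu up] lst.
have := bridge_count_upper yc (introT andP (conj up lst)).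
by rewrite (adj_clients_bipartite xu) xc /=; lia.
Qed.

Lemma interior_bridges_lower s t x p y : x \in cl -> y \in cl -> x != y ->
  (forall i, 0 < i <= n -> adj T (o i) x -> i <= t) ->
  (forall i, 0 < i <= n -> adj T (o i) y -> s <= i) -> walk T x p y ->
  s <= t + count (bridge T o n) (behead (belast x p)).
Proof.
move=> xc yc xy xnear yfar; case: p => [|u p] /=.
  by case/andP=> _ /= /eqP xy'; rewrite xy' eqxx in xy.
case/andP=> /andP[xu up] lst; have [j hj eu] := adj_client_orch xc xu.
have := bridge_count_lower yc yfar (introT andP (conj up lst)) hj (or_introl eu).
have := xnear j hj; rewrite -eu adjC => /(_ xu); lia.
Qed.

End TreeLike.

Lemma big_addb_last (f : nat -> bool) a m : a <= m ->
  (forall i, a <= i < m -> f i = false) -> \big[addb/false]_(a <= i < m.+1) f i = f m.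
Proof.
move=> am f0; rewrite big_nat_recr //= big_nat_cond big1 // => i /andP[ami _].
exact: f0.
Qed.

Lemma big_addb_first (f : nat -> bool) a m : a <= m ->
  (forall i, a < i <= m -> f i = false) -> \big[addb/false]_(a <= i < m.+1) f i = f a.
Proof.
move=> am f0; rewrite big_ltn // big_nat_cond big1 ?addbF // => i /andP[ami _].
exact: f0.
Qed.

Section Measurements.
Variables (V : finType) (T : graph V) (n kc kb : nat) (o : nat -> V).
Hypothesis tl : tree_like T n kc kb o.
Variable a : nat.
Hypothesis a_pos : 0 < a.
Local Notation cl := (clients T o n).

Definition chain_invariant (m : nat) (G : graph V) : Prop :=
  [/\ {subset cl <= gverts G},
      forall j, m <= j <= n -> o j \in gverts G,
      forall i j, m <= i <= n -> m <= j <= n -> adj G (o i) (o j) = false,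
      forall j z, m < j <= n -> z \in cl -> adj G (o j) z = adj T (o j) z &
      forall z, z \in cl -> adj G (o m) z = \big[addb/false]_(a <= i < m.+1) adj T (o i) z].

Lemma chain_invariant_start : a <= n -> chain_invariant a T.
Proof.
move=> an; split=> [z|j hj|i j hi hj|//|z _]; last by rewrite big_nat1.
- exact: client_vert.
- by apply: (orch_vert tl); lia.
- by apply: (adj_orch_orch tl); lia.
Qed.

Lemma chain_adj_last m G z : chain_invariant m G -> a <= m -> z \in cl ->
  (forall i, a <= i < m -> ~~ adj T (o i) z) -> adj G (o m) z = adj T (o m) z.
Proof. by case=> _ _ _ _ om am zc far; rewrite om // big_addb_last // => i /far/negbTE. Qed.

Lemma chain_adj_first m G z : chain_invariant m G -> a <= m -> z \in cl ->
  (forall i, a < i <= m -> ~~ adj T (o i) z) -> adj G (o m) z = adj T (o a) z.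
Proof. by case=> _ _ _ _ om am zc far; rewrite om // big_addb_first // => i /far/negbTE. Qed.

Lemma chain_support m G w : chain_invariant m G -> a <= m < n ->
  adj T (o m) w -> adj T (o m.+1) w -> w \in nbr G (o m).
Proof.
move=> inv /andP[am mn] amw am1w; have [cV _ _ _ _] := inv.
have m_idx : 0 < m <= n by lia.
have wc := adj_orch_client tl m_idx amw.
rewrite in_nbr cV // (chain_adj_last inv) // => i /andP[ai im]; apply/negP => aiw.
have [i_idx m1_idx] : 0 < i <= n /\ 0 < m.+1 <= n by lia.
have := adj_orch_near tl i_idx m1_idx aiw am1w; lia.
Qed.

Lemma chain_invariant_step m G w : chain_invariant m G -> a <= m < n ->
  adj T (o m) w -> adj T (o m.+1) w -> chain_invariant m.+1 (meas_x G (o m) w).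
Proof.
move=> inv /andP[am mn] amw am1w; have [cV oV oo oc om] := inv.
have m_idx : 0 < m <= n by lia.
have wc := adj_orch_client tl m_idx amw.
have wN := chain_support inv (introT andP (conj am mn)) amw am1w.
have omV : o m \in gverts G by apply: oV; lia.
have om_neq j : m < j <= n -> o j != o m by move=> hj; apply: (orch_neq tl); lia.
have step j y : m < j <= n -> y \in gverts G -> y != o j -> y != o m ->
    adj (meas_x G (o m) w) (o j) y = adj G (o j) y (+) (adj T (o j) w && adj G (o m) y).
  move=> hj yV yj ym; rewrite adj_meas_x_nonadj ?om_neq ?oV ?oo ?ym 1?eq_sym //; try lia.
  by rewrite (adjC G w) (oc j w).
split.
- move=> z zc; rewrite gverts_meas_x in_setD1 cV // andbT eq_sym.
  exact: orch_neq_client m_idx zc.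
- by move=> j hj; rewrite gverts_meas_x in_setD1 om_neq ?oV //; lia.
- move=> i j hi hj; have [->|ij] := eqVneq i j; first exact: adjxx.
  have [i_idx j_idx] : 0 < i <= n /\ 0 < j <= n by lia.
  have oji : o j != o i by rewrite (orch_neq tl) // eq_sym.
  by rewrite step ?oji ?om_neq ?oV ?oo ?andbF //; lia.
- move=> j z hj zc; have [mj j_idx] : m < j <= n /\ 0 < j <= n by lia.
  rewrite step ?cV ?(oc j z) ?(eq_sym z) ?(orch_neq_client j_idx zc)
    ?(orch_neq_client m_idx zc) //.
  suff -> : adj T (o j) w = false by rewrite andFb addbF.
  apply/negP => ajw; have := adj_orch_near tl m_idx j_idx amw ajw; lia.
- move=> z zc; have [mm1 m1_idx] : m < m.+1 <= n /\ 0 < m.+1 <= n by lia.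
  rewrite step ?cV ?(oc m.+1 z) ?am1w ?om ?(eq_sym z) ?(orch_neq_client m1_idx zc)
    ?(orch_neq_client m_idx zc) //.
  by rewrite [RHS]big_nat_recr 1?addbC //; lia.
Qed.

Lemma chain_invariant_chain beta b : b <= n ->
  (forall m, a <= m < b -> adj T (o m) (beta m) && adj T (o m.+1) (beta m)) ->
  forall k, a + k <= b -> chain_invariant (a + k) (chain T o beta a k).
Proof.
move=> bn beta_adj; elim=> [|k IH] akb.
  by rewrite addn0; apply: chain_invariant_start; lia.
have /andP[h1 h2] : adj T (o (a + k)) (beta (a + k)) && adj T (o (a + k).+1) (beta (a + k)).
  by apply: beta_adj; lia.
by rewrite addnS; apply: chain_invariant_step => //; [apply: IH | ]; lia.
Qed.

End Measurements.

Section ArtificialLink.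
Variables (V : finType) (T : graph V) (n kc kb : nat) (o : nat -> V).
Variables (a b : nat) (c c' : V) (beta : nat -> V).
Local Notation cl := (clients T o n).
Hypotheses (tl : tree_like T n kc kb o) (a_pos : 0 < a) (ab : a <= b) (bn : b <= n).
Hypotheses (cc : c \in cl) (c'c : c' \in cl) (cc' : c != c').
Hypotheses (ac : adj T (o a) c) (bc' : adj T (o b) c').
Hypothesis ends : a < b -> ~~ adj T (o a.+1) c /\ ~~ adj T (o b.-1) c'.
Hypothesis beta_adj : forall m, a <= m < b -> adj T (o m) (beta m) && adj T (o m.+1) (beta m).

Lemma c_far i : 0 < i <= n -> a < i -> a < b -> ~~ adj T (o i) c.
Proof.
move=> hi ai lt_ab; apply/negP => aic; have [c_not _] := ends lt_ab.
have a_idx : 0 < a <= n by lia.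
have := adj_orch_near tl a_idx hi ac aic.
have [ia|] := eqVneq i a.+1; first by rewrite -ia aic in c_not.
lia.
Qed.

Lemma c'_far i : 0 < i <= n -> i < b -> a < b -> ~~ adj T (o i) c'.
Proof.
move=> hi ib lt_ab; apply/negP => aic'; have [_ c'_not] := ends lt_ab.
have b_idx : 0 < b <= n by lia.
have := adj_orch_near tl hi b_idx aic' bc'.
have [ib'|] := eqVneq i b.-1; first by rewrite -ib' aic' in c'_not.
lia.
Qed.

Lemma chain_inv m : a <= m <= b -> chain_invariant T n o a m (chain T o beta a (m - a)).
Proof.
case/andP=> am mb; rewrite -{1}(subnKC am).
by apply: (chain_invariant_chain tl a_pos bn beta_adj); rewrite subnKC.
Qed.

Lemma beta_in_chain m : a <= m < b -> beta m \in nbr (chain T o beta a (m - a)) (o m).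
Proof.
move=> hm; have /andP[amb am1b] := beta_adj hm.
by apply: (chain_support tl a_pos (chain_inv _)) => //; lia.
Qed.

Lemma c'_in_chain : c' \in nbr (chain T o beta a (b - a)) (o b).
Proof.
have inv := chain_inv (introT andP (conj ab (leqnn b))); have [cV _ _ _ _] := inv.
rewrite in_nbr cV // (chain_adj_last inv) // => i hi.
by apply: c'_far; lia.
Qed.

Lemma link_created : adj (meas_x (chain T o beta a (b - a)) (o b) c') c c'.
Proof.
have inv := chain_inv (introT andP (conj ab (leqnn b))); have [cV oV _ _ _] := inv.
have cb : c != o b by rewrite eq_sym (orch_neq_client _ cc) //; lia.
rewrite adj_meas_x_support ?oV ?cV ?c'_in_chain //; last by lia.
by rewrite (chain_adj_first inv) // => i hi; apply: c_far; lia.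
Qed.

Fixpoint orch_route (m k : nat) : seq V :=
  if k is k'.+1 then beta m :: o m.+1 :: orch_route m.+1 k' else [:: c'].

Lemma size_orch_route m k : size (orch_route m k) = (2 * k).+1.
Proof. by elim: k m => [|k IH] m //=; rewrite IH; lia. Qed.

Lemma walk_orch_route m k : a <= m -> m + k = b -> walk T (o m) (orch_route m k) c'.
Proof.
elim: k m => [|k IH] m am mkb; first by rewrite addn0 in mkb; rewrite /walk /= mkb bc' eqxx.
have /andP[amb am1b] : adj T (o m) (beta m) && adj T (o m.+1) (beta m).
  by apply: beta_adj; lia.
have /andP[pth lst] : walk T (o m.+1) (orch_route m.+1 k) c' by apply: IH; lia.
by rewrite /walk /= amb adjC am1b pth.
Qed.

Lemma proximity : is_proximity T o n c c' (b - a + 1).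
Proof.
have route_walk : walk T c (o a :: orch_route a (b - a)) c'.
  have /andP[pth lst] := walk_orch_route (leqnn a) (subnKC ab).
  by rewrite /walk /= adjC ac pth.
split; first exact: shortest_walk_exists route_walk.
move=> p [cpc' p_short]; have := p_short _ route_walk.
have := interior_bridges_upper tl cc c'c cc' cpc'.
rewrite /= size_orch_route; case: (ltnP a b) => [lt_ab | ba]; last by lia.
have c_near i : 0 < i <= n -> adj T (o i) c -> i <= a.
  by move=> hi aic; rewrite leqNgt; apply: contraL aic => ai; apply: c_far.
have c'_near i : 0 < i <= n -> adj T (o i) c' -> b <= i.
  by move=> hi aic'; rewrite leqNgt; apply: contraL aic' => ib; apply: c'_far.
have := interior_bridges_lower tl cc c'c cc' c_near c'_near cpc'; lia.
Qed.

Lemma measurement_chain_spec :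
  [/\ is_proximity T o n c c' (b - a + 1),
      (forall m, a <= m < b -> beta m \in nbr (chain T o beta a (m - a)) (o m)),
      c' \in nbr (chain T o beta a (b - a)) (o b) &
      adj (meas_x (chain T o beta a (b - a)) (o b) c') c c'].
Proof.
by split; [exact: proximity | exact: beta_in_chain | exact: c'_in_chain | exact: link_created].
Qed.

End ArtificialLink.

Theorem lemma5 (V : finType) (T : graph V) (n kc kb : nat) (o : nat -> V)
    (a b : nat) (c c' : V) (beta : nat -> V) :
  tree_like T n kc kb o ->
  1 <= a -> a <= b -> b <= n ->
  c \in clients T o n -> c' \in clients T o n -> c != c' ->
  c \in nbr T (o a) -> c' \in nbr T (o b) ->
  (a < b -> c \notin nbr T (o a.+1) /\ c' \notin nbr T (o b.-1)) ->
  (forall m, a <= m < b -> beta m \in nbr T (o m) :&: nbr T (o m.+1)) ->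
  [/\ is_proximity T o n c c' (b - a + 1),
      (forall m, a <= m < b -> beta m \in nbr (chain T o beta a (m - a)) (o m)),
      c' \in nbr (chain T o beta a (b - a)) (o b) &
      adj (meas_x (chain T o beta a (b - a)) (o b) c') c c'].
Proof.
move=> tl a_pos ab bn cc c'c cc' /setIdP[_ ac] /setIdP[_ bc'] ends beta_nbr.
have {}ends : a < b -> ~~ adj T (o a.+1) c /\ ~~ adj T (o b.-1) c'.
  by move/ends; rewrite !in_nbr (client_vert cc) (client_vert c'c).
have beta_adj m : a <= m < b -> adj T (o m) (beta m) && adj T (o m.+1) (beta m).
  by move/beta_nbr; rewrite in_setI !in_nbr => /andP[/andP[_ ->] /andP[_ ->]].
exact: measurement_chain_spec tl a_pos ab bn cc c'c cc' ac bc' ends beta_adj.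
Qed.
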